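(* Consider the standard DC program $(P)$ under Assumption A. Let $\{x^k\}$ and $\{y^k\}$ (with $y^k\in\partial h(x^k)$) be well-defined and bounded sequences generated by DCA for $(P)$ from $x^0\in\operatorname{dom}\partial h$. Suppose that (a) $f$ is continuous on $\operatorname{dom}f$; (b) $f$ satisfies the Łojasiewicz subgradient inequality at every cluster point of $\{x^k\}$; (c) $\rho_g+\rho_h>0$; (d) $h$ is differentiable with locally Lipschitz continuous gradient. Then $\{x^k\}$ converges.
   Context: $\Gamma_0(\mathbb{R}^n)$ is the set of proper, lower semicontinuous, convex functions $\mathbb{R}^n\to(-\infty,\infty]$. Let $g,h\in\Gamma_0(\mathbb{R}^n)$ and $f=g-h$ with convention $\infty-\infty=\infty$. Problem $(P)$: $\inf\{f(x):x\in\mathbb{R}^n\}$. Assumption A: $g,h\in\Gamma_0(\mathbb{R}^n)$ and the solution set of $(P)$ is nonempty. DCA: given $x^0\in\operatorname{dom}\partial h$, for $k=0,1,\dots$ choose $y^k\in\partial h(x^k)$ and $x^{k+1}\in\operatorname{argmin}\{g(x)-\langle y^k,x\rangle: x\in\mathbb{R}^n\}$. Convexity moduli: $\rho_g,\rho_h\ge0$ are constants such that for all $x,z$, all $w\in\partial g(x)$, $v\in\partial h(x)$: $g(z)\ge g(x)+\langle w,z-x\rangle+\frac{\rho_g}{2}\|z-x\|^2$ and $h(z)\ge h(x)+\langle v,z-x\rangle+\frac{\rho_h}{2}\|z-x\|^2$. For a proper lsc $\phi:\mathbb{R}^n\to(-\infty,\infty]$, the Fréchet subdifferential at $x\in\operatorname{dom}\phi$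 is $\partial^F\phi(x)=\{y:\liminf_{z\to x,z\neq x}\frac{\phi(z)-\phi(x)-\langle y,z-x\rangle}{\|z-x\|}\ge0\}$ ($\emptyset$ if $x\notin\operatorname{dom}\phi$), and the limiting subdifferential is $\partial^L\phi(x)=\{y:\exists x^j\to x,\ \phi(x^j)\to\phi(x),\ y^j\in\partial^F\phi(x^j),\ y^j\to y\}$. $\phi$ satisfies the Łojasiewicz subgradient inequality at $x^*$ if there exist $\theta\in[0,1)$, $M>0$ and a neighbourhood $\mathcal V$ of $x^*$ such that $|\phi(x)-\phi(x^* )|^\theta\le M\|y\|$ for all $x\in\mathcal V$ and all $y\in\partial^L\phi(x)$ (convention $0^0=1$). *)

From HB Require Import structures.
From mathcomp Require Import all_boot all_order all_algebra.
From mathcomp Require Import all_classical all_reals all_analysis.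
Set Implicit Arguments. Unset Strict Implicit. Unset Printing Implicit Defensive.
Import Order.TTheory GRing.Theory Num.Theory.
Import numFieldNormedType.Exports.
Local Open Scope classical_set_scope.
Local Open Scope ring_scope.

Section DC.
Variables (R : realType) (n : nat).
Local Notation vec := 'rV[R]_n.

Definition dot (u v : vec) : R := \sum_(i < n) u ord0 i * v ord0 i.
Definition enorm (u : vec) : R := Num.sqrt (dot u u).

Local Open Scope ereal_scope.

Definition proper_fun (f : vec -> \bar R) : Prop :=
  (forall x, f x != -oo) /\ (exists x, f x < +oo).

Definition convex_fun (f : vec -> \bar R) : Prop :=
  forall (x y : vec) (t : R), (0 < t < 1)%R ->
    f (t *: x + (1 - t) *: y)%R <= t%:E * f x + (1 - t)%:E * f y.

Definition Gamma0 (f : vec -> \bar R) : Prop :=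
  proper_fun f /\ lower_semicontinuous f /\ convex_fun f.

(* f = g - h with the convention +oo - +oo = +oo *)
Definition dcfun (g h : vec -> \bar R) (x : vec) : \bar R :=
  if g x == +oo then +oo else g x - h x.

Definition dom (f : vec -> \bar R) : set vec := [set x | f x < +oo].

Definition csubdiff (f : vec -> \bar R) (x : vec) : set vec :=
  [set v | f x \is a fin_num /\
           forall z, f z >= f x + (dot v (z - x)%R)%:E].

Definition solution_set (f : vec -> \bar R) : set vec :=
  [set xs | forall x, f xs <= f x].

Definition DCA_sequence (g h : vec -> \bar R) (x y : nat -> vec) : Prop :=
  forall k, csubdiff h (x k) (y k) /\
    (forall z, g (x k.+1) - (dot (y k) (x k.+1))%:E <= g z - (dot (y k) z)%:E).

Definition convexity_modulus (f : vec -> \bar R) (rho : R) : Prop :=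
  (0 <= rho)%R /\
  forall x z w, csubdiff f x w ->
    f z >= f x + (dot w (z - x)%R)%:E + (rho / 2 * enorm (z - x)%R ^+ 2)%:E.

Definition bounded_seq (u : nat -> vec) : Prop :=
  exists M : R, forall k, (enorm (u k) <= M)%R.

(* Frechet subdifferential: liminf_{z -> x, z <> x}
   (phi z - phi x - <y, z - x>) / ||z - x|| >= 0 *)
Definition frechet_subdiff (phi : vec -> \bar R) (x : vec) : set vec :=
  [set y | phi x \is a fin_num /\
     forall eps : R, (0 < eps)%R -> exists2 delta : R, (0 < delta)%R &
       forall z, (0 < enorm (z - x) < delta)%R ->
         phi z - phi x - (dot y (z - x)%R)%:E >= (- (eps * enorm (z - x)%R))%:E].

Definition limiting_subdiff (phi : vec -> \bar R) (x : vec) : set vec :=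
  [set y | phi x \is a fin_num /\
     exists (xj yj : nat -> vec),
       [/\ xj @ \oo --> x, (phi \o xj) @ \oo --> phi x,
           (forall j, frechet_subdiff phi (xj j) (yj j)) & yj @ \oo --> y]].

Definition lojasiewicz_at (phi : vec -> \bar R) (xs : vec) : Prop :=
  phi xs \is a fin_num /\
  exists (theta M : R) (V : set vec),
    [/\ (0 <= theta < 1)%R, (0 < M)%R, nbhs xs V &
      forall x y, V x -> limiting_subdiff phi x y ->
        (`| fine (phi x) - fine (phi xs) | `^ theta <= M * enorm y)%R].

Definition cluster_point (u : nat -> vec) (xs : vec) : Prop :=
  forall (eps : R) (N : nat), (0 < eps)%R ->
    exists2 k, (N <= k)%N & (enorm (u k - xs) < eps)%R.

Definition diff_loclip_grad (h : vec -> \bar R) : Prop :=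
  exists grad : vec -> vec,
    (forall x, h x \is a fin_num) /\
    (forall x (eps : R), (0 < eps)%R -> exists2 delta : R, (0 < delta)%R &
       forall z, (enorm (z - x) < delta)%R ->
         (`| fine (h z) - fine (h x) - dot (grad x) (z - x) |
            <= eps * enorm (z - x))%R) /\
    (forall x, exists2 r : R, (0 < r)%R & exists L : R,
       forall u v, (enorm (u - x) < r)%R -> (enorm (v - x) < r)%R ->
         (enorm (grad u - grad v) <= L * enorm (u - v))%R).

End DC.

(* Summing the strong convexity inequalities of g at x^{k+1} and of h at x^k
   shows that f(x^k) decreases by at least (rho_g + rho_h)/2 |x^{k+1} - x^k|^2.
   As h is smooth, y^k = grad h(x^k), and grad h(x^k) - grad h(x^{k+1}) is a
   Frechet (hence limiting) subgradient of f at x^{k+1}, of norm at most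
   L |x^{k+1} - x^k| near a cluster point xs.  By continuity f(x^k) decreases
   to f(xs), and the Lojasiewicz inequality at xs combined with the concavity
   of s |-> s^(1-theta) gives
     2 |x^{k+1} - x^k| <= |x^k - x^{k-1}| + C (r_k^(1-theta) - r_{k+1}^(1-theta))
   with r_k = f(x^k) - f(xs), as long as the iterates stay near xs.  Starting
   close enough to xs, they never leave, so the length of the trajectory is
   finite and (x^k) is a Cauchy sequence. *)

From mathcomp Require Import all_boot all_order all_algebra.
From mathcomp Require Import all_classical all_reals all_analysis.
From mathcomp Require Import ring lra zify.
Set Implicit Arguments. Unset Strict Implicit. Unset Printing Implicit Defensive.
Import Order.TTheory GRing.Theory Num.Theory.
Import numFieldNormedType.Exports.
Local Open Scope classical_set_scope.
Local Open Scope ring_scope.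

Section EuclideanNorm.
Variables (R : realType) (n : nat).
Implicit Types (u v w : 'rV[R]_n) (t : R).

Lemma dotBl u v w : dot (u - v) w = dot u w - dot v w.
Proof. by rewrite /dot -sumrB; apply: eq_bigr => i _; rewrite !mxE; ring. Qed.

Lemma dotBr u v w : dot u (v - w) = dot u v - dot u w.
Proof. by rewrite /dot -sumrB; apply: eq_bigr => i _; rewrite !mxE; ring. Qed.

Lemma dotZl t u v : dot (t *: u) v = t * dot u v.
Proof. by rewrite /dot mulr_sumr; apply: eq_bigr => i _; rewrite !mxE; ring. Qed.

Lemma dotZr t u v : dot u (t *: v) = t * dot u v.
Proof. by rewrite /dot mulr_sumr; apply: eq_bigr => i _; rewrite !mxE; ring. Qed.

Lemma dot_ge0 u : 0 <= dot u u.
Proof. by apply: sumr_ge0 => i _; rewrite -expr2 sqr_ge0. Qed.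

Lemma dot_eq0 u : dot u u = 0 -> u = 0.
Proof.
move=> /eqP; rewrite psumr_eq0 => [/allP u0|i _]; last by rewrite -expr2 sqr_ge0.
apply/rowP => i; rewrite mxE.
by have := u0 i (mem_index_enum i); rewrite -expr2 sqrf_eq0 => /eqP.
Qed.

Lemma enorm_ge0 u : 0 <= enorm u.
Proof. exact: sqrtr_ge0. Qed.

Lemma enorm_sqr u : enorm u ^+ 2 = dot u u.
Proof. by rewrite sqr_sqrtr // dot_ge0. Qed.

Lemma enorm_eq0 u : enorm u = 0 -> u = 0.
Proof. by move=> u0; apply: dot_eq0; rewrite -enorm_sqr u0 expr0n. Qed.

Lemma enormZ t u : enorm (t *: u) = `|t| * enorm u.
Proof. by rewrite /enorm dotZl dotZr mulrA -expr2 sqrtrM ?sqr_ge0 // sqrtr_sqr. Qed.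

Lemma enormN u : enorm (- u) = enorm u.
Proof. by rewrite -scaleN1r enormZ normrN1 mul1r. Qed.

Lemma enorm_distC u v : enorm (u - v) = enorm (v - u).
Proof. by rewrite -enormN opprB. Qed.

Lemma coord_le_enorm u i : `|u ord0 i| <= enorm u.
Proof.
rewrite -sqrtr_sqr /enorm ler_sqrt ?dot_ge0 // /dot (bigD1 i) //= -expr2 lerDl.
by apply: sumr_ge0 => j _; rewrite -expr2 sqr_ge0.
Qed.

Lemma coord_le_normr u i : `|u ord0 i| <= `|u|.
Proof.
rewrite [leRHS]/Num.norm /= mx_normrE.
by apply/bigmax_geP; right => /=; exists (ord0, i).
Qed.

Lemma normr_le_enorm u : `|u| <= enorm u.
Proof.
rewrite [leLHS]/Num.norm /= mx_normrE.
apply/bigmax_leP; split=> [|[i j] _ /=]; first exact: enorm_ge0.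
by rewrite (ord1 i); exact: coord_le_enorm.
Qed.

Lemma enorm_le_normr u : enorm u <= n.+1%:R * `|u|.
Proof.
rewrite -[n.+1%:R * _]ger0_norm ?mulr_ge0 // -sqrtr_sqr /enorm.
rewrite ler_sqrt ?sqr_ge0 //.
apply: (@le_trans _ _ (\sum_(i < n) `|u| ^+ 2)).
  apply: ler_sum => i _; rewrite -expr2 -real_normK ?num_real //.
  by rewrite lerXn2r ?nnegrE // coord_le_normr.
rewrite sumr_const card_ord -[leLHS]mulr_natl exprMn.
by apply: ler_wpM2r; rewrite ?sqr_ge0 // expr2 -natrM ler_nat; nia.
Qed.

End EuclideanNorm.

Section PowerInequalities.
Variable R : realType.
Implicit Types (t a b : R).

Lemma powR_AMGM t a b : 0 <= t < 1 -> 0 <= a -> 0 <= b ->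
  a `^ t * b `^ (1 - t) <= t * a + (1 - t) * b.
Proof.
move=> /andP[t0 t1] a0 b0.
have [->|tn0] := eqVneq t 0.
  by rewrite powRr0 subr0 powRr1 // mul1r mul0r add0r.
have tp : 0 < t by rewrite lt_neqAle eq_sym tn0.
have t1p : 0 < 1 - t by rewrite subr_gt0.
have := @conjugate_powR R (a `^ t) (b `^ (1 - t)) t^-1 (1 - t)^-1
  (powR_ge0 _ _) (powR_ge0 _ _) (ltac:(by rewrite invr_gt0)) (ltac:(by rewrite invr_gt0)).
rewrite !invrK -!powRrM !mulfV ?gt_eqF // !powRr1 // => young.
by rewrite [t * a]mulrC [(1 - t) * b]mulrC young // addrC subrK.
Qed.

Lemma powR_concave_diff t a b : 0 <= t < 1 -> 0 <= b <= a ->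
  (1 - t) * (a - b) <= a `^ t * (a `^ (1 - t) - b `^ (1 - t)).
Proof.
move=> t01 /andP[b0 ba]; have a0 := le_trans b0 ba.
have amgm := powR_AMGM t01 a0 b0.
have split_a : a `^ t * a `^ (1 - t) = a.
  by rewrite -powRD; rewrite addrC subrK ?oner_eq0 ?powRr1.
rewrite [leRHS]mulrBr split_a; lra.
Qed.

Lemma lojasiewicz_step_bound (c C t a b d dprev : R) :
  0 < c -> 0 <= C -> 0 <= t < 1 -> 0 <= b <= a -> 0 <= d -> 0 <= dprev ->
  c * d ^+ 2 <= a - b -> a `^ t <= C * dprev ->
  2 * d <= dprev + C / (c * (1 - t)) * (a `^ (1 - t) - b `^ (1 - t)).
Proof.
move=> c0 C0 t01 b0a d0 dprev0 desc loj.
have t1p : 0 < 1 - t by case/andP: t01 => _; rewrite subr_gt0.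
case/andP: (b0a) => b0 ba.
set w := a `^ (1 - t) - b `^ (1 - t).
have w0 : 0 <= w by rewrite subr_ge0 ge0_ler_powR ?nnegrE ?(le_trans b0 ba) // ltW.
have concave := powR_concave_diff t01 b0a.
have sq : d ^+ 2 <= dprev * (C / (c * (1 - t)) * w).
  have -> : dprev * (C / (c * (1 - t)) * w) = C * dprev * w / (c * (1 - t)).
    by field; rewrite ?gt_eqF.
  rewrite ler_pdivlMr ?mulr_gt0 //.
  apply: (le_trans _ (le_trans concave _)).
    by rewrite [leRHS]mulrC mulrA; apply: ler_wpM2r; [exact: ltW t1p | rewrite mulrC].
  exact: ler_wpM2r.
have q0 : 0 <= C / (c * (1 - t)) * w by rewrite mulr_ge0 // divr_ge0 // mulr_ge0 // ltW.
move: sq q0; set q := _ * w => sq q0.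
rewrite leNgt; apply/negP => lt2d.
have : (dprev + q) ^+ 2 < (2 * d) ^+ 2.
  by rewrite ltr_pXn2r // nnegrE; [exact: addr_ge0 | exact: mulr_ge0].
have := sqr_ge0 (dprev - q); nra.
Qed.

End PowerInequalities.

Lemma length_bound_of_step_ineq (R : realType) (D u P : nat -> R) (K : nat) (d : R) :
  (forall k, 0 <= D k) -> (forall k, 0 <= u k) ->
  (forall k, P k.+1 <= P k + D k) ->
  P K.-1 < d -> P K + D K.-1 + u K < d ->
  (forall k, (K <= k)%N -> P k.-1 < d -> P k < d ->
     2 * D k <= D k.-1 + (u k - u k.+1)) ->
  forall k, \sum_(K <= j < k) D j <= D K.-1 + u K.
Proof.
move=> D0 u0 Pup PK1 PK step.
pose S m := \sum_(K <= j < K + m) D j.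
have S0 m : 0 <= S m by apply: sumr_ge0.
have SS m : S m.+1 = S m + D (K + m)%N by rewrite /S addnS big_nat_recr //= leq_addr.
have P_le m : P (K + m)%N <= P K + S m.
  elim: m => [|m IH]; first by rewrite /S !addn0 big_geq // addr0.
  by rewrite addnS SS; apply: (le_trans (Pup _)); lra.
have potential_le m : S m + D (K + m)%N.-1 + u (K + m)%N <= D K.-1 + u K.
  elim: m => [|m IH]; first by rewrite /S addn0 big_geq // add0r.
  have PKm : P (K + m)%N < d.
    have := P_le m; have := u0 (K + m)%N; have := D0 (K + m).-1; lra.
  have PKm1 : P (K + m).-1 < d.
    case: m IH PKm => [|m] IH PKm; first by rewrite addn0.
    rewrite addnS /=; have := P_le m; have := SS m.
    have := u0 (K + m.+1)%N; have := D0 (K + m)%N; have := D0 (K + m.+1).-1; lra.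
  have := step _ (leq_addr _ _) PKm1 PKm.
  by rewrite SS addnS /=; lra.
move=> k; have [kK|Kk] := leqP k K; first by rewrite big_geq // addr_ge0.
have Kk_le := ltnW Kk.
have := potential_le (k - K)%N; rewrite /S subnKC //.
by have := D0 k.-1; have := u0 k; lra.
Qed.

Section LojasiewiczFiniteLength.
Variables (R : realType) (F D P : nat -> R) (Fs c C t d : R).
Hypotheses (c_gt0 : 0 < c) (C_ge0 : 0 <= C) (t01 : 0 <= t < 1) (d_gt0 : 0 < d).
Hypothesis D_ge0 : forall k, 0 <= D k.
Hypothesis F_ge : forall k, (1 <= k)%N -> Fs <= F k.
Hypothesis F_descent : forall k, (1 <= k)%N -> F k.+1 + c * D k ^+ 2 <= F k.
Hypothesis P_succ_le : forall k, P k.+1 <= P k + D k.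
Hypothesis P_le_succ : forall k, P k <= P k.+1 + D k.
Hypothesis F_lojasiewicz : forall k, (2 <= k)%N -> P k.-1 < d -> P k < d ->
  (F k - Fs) `^ t <= C * D k.-1.
Hypothesis P_small_often : forall e N, 0 < e -> exists2 k, (N <= k)%N & P k < e.
Hypothesis F_small : forall e, 0 < e -> exists2 k, (1 <= k)%N & F k - Fs < e.

Let r k := F k - Fs.
Let phi s := s `^ (1 - t).
Let Cr := C / (c * (1 - t)).

Let t1_gt0 : 0 < 1 - t.
Proof. by case/andP: t01 => _; rewrite subr_gt0. Qed.

Let Cr_ge0 : 0 <= Cr.
Proof. by rewrite divr_ge0 // mulr_ge0 // ltW. Qed.

Let r_ge0 k : (1 <= k)%N -> 0 <= r k.
Proof. by move/F_ge; rewrite /r subr_ge0. Qed.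

Let r_descent k : (1 <= k)%N -> c * D k ^+ 2 <= r k - r k.+1.
Proof. by move/F_descent; rewrite /r; lra. Qed.

Let r_succ_le k : (1 <= k)%N -> r k.+1 <= r k.
Proof.
move=> k1; have := r_descent k1.
have : 0 <= c * D k ^+ 2 by rewrite mulr_ge0 ?sqr_ge0 ?ltW.
lra.
Qed.

Let r_le i j : (1 <= i)%N -> (i <= j)%N -> r j <= r i.
Proof.
move=> i1; elim: j => [|j IH]; first by rewrite leqn0 => /eqP ->.
rewrite leq_eqVlt => /orP[/eqP-> //|]; rewrite ltnS => ij.
exact: le_trans (r_succ_le (leq_trans i1 ij)) (IH ij).
Qed.

Let lojasiewicz_step k : (2 <= k)%N -> P k.-1 < d -> P k < d ->
  2 * D k <= D k.-1 + (Cr * phi (r k) - Cr * phi (r k.+1)).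
Proof.
move=> k2 Pk1 Pk; have k1 : (1 <= k)%N by apply: leq_trans k2.
rewrite -mulrBr; apply: lojasiewicz_step_bound => //.
- by rewrite r_ge0 // r_succ_le.
- exact: r_descent.
- exact: F_lojasiewicz.
Qed.

Let lojasiewicz_start : exists2 K, (2 <= K)%N & P K.-1 < d /\ P K + D K.-1 + Cr * phi (r K) < d.
Proof.
(* each of [P K], [D K.-1] and [Cr * phi (r K)] is made smaller than [d / 3] *)
have d3 : 0 < d / 3 by rewrite divr_gt0.
pose q := d / 3 / (Cr + 1).
have q0 : 0 < q by rewrite divr_gt0 // ltr_pwDr.
pose e1 := c * (d / 3) ^+ 2; pose e2 := q `^ (1 - t)^-1.
have e10 : 0 < e1 by rewrite mulr_gt0 // exprn_gt0.
have e20 : 0 < e2 by apply: powR_gt0.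
have [k0 k01 rk0] : exists2 k, (1 <= k)%N & F k - Fs < Num.min e1 e2.
  by apply: F_small; rewrite lt_min e10 e20.
have [K KN PK] := P_small_often k0.+1 d3.
have K2 : (2 <= K)%N by apply: leq_trans KN; rewrite ltnS.
have K1 : (1 <= K.-1)%N by rewrite -ltnS prednK // (leq_trans _ K2).
have succK1 : K.-1.+1 = K by rewrite prednK // (leq_trans _ K2).
have rK1 : r K.-1 < Num.min e1 e2.
  by apply: le_lt_trans rk0; apply: r_le; rewrite // -ltnS succK1.
move: rK1; rewrite lt_min => /andP[rK1e1 rK1e2].
have DK1 : D K.-1 < d / 3.
  have := r_descent K1; rewrite succK1 => desc.
  have := r_ge0 (leq_trans (isT : 1 <= 2)%N K2) => rK0.
  have : c * D K.-1 ^+ 2 < c * (d / 3) ^+ 2 by rewrite -/e1; lra.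
  by rewrite ltr_pM2l // ltr_pXn2r ?nnegrE // ltW.
have phiK : Cr * phi (r K) <= d / 3.
  have rKe2 : r K <= e2.
    by have := r_succ_le K1; rewrite succK1 => rK; apply: (le_trans rK (ltW rK1e2)).
  have : phi (r K) <= q.
    have := @ge0_ler_powR _ (1 - t) (ltW t1_gt0) (r K) e2.
    rewrite /phi /e2 -powRrM mulVf ?gt_eqF // powRr1 ?(ltW q0) // ?nnegrE.
    by move=> /(_ (r_ge0 (leq_trans (isT : 1 <= 2)%N K2)) (ltW e20) rKe2).
  move=> /(ler_wpM2l Cr_ge0) /le_trans; apply.
  have -> : d / 3 = (Cr + 1) * q by rewrite /q; field; rewrite gt_eqF // ltr_pwDr.
  by apply: ler_wpM2r; [exact: ltW | rewrite lerDl].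
exists K => //; split; last by lra.
by have := P_le_succ K.-1; rewrite succK1; lra.
Qed.

Lemma lojasiewicz_finite_length : exists K B, forall k, \sum_(K <= j < k) D j <= B.
Proof.
have [K K2 [PK1 PK]] := lojasiewicz_start.
exists K, (D K.-1 + Cr * phi (r K)).
apply: (@length_bound_of_step_ineq _ D (fun k => Cr * phi (r k)) P K d) => //.
- by move=> k; exact: mulr_ge0 Cr_ge0 (powR_ge0 _ _).
- by move=> k Kk; exact/lojasiewicz_step/(leq_trans K2).
Qed.

End LojasiewiczFiniteLength.

Section Subdifferentials.
Variables (R : realType) (n : nat).
Local Notation vec := 'rV[R]_n.
Implicit Types (g h phi : vec -> \bar R) (p v w : vec).

Definition is_gradient h (grad : vec -> vec) : Prop :=
  forall p (eps : R), 0 < eps -> exists2 delta : R, 0 < delta &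
    forall z, enorm (z - p) < delta ->
      `| fine (h z) - fine (h p) - dot (grad p) (z - p) | <= eps * enorm (z - p).

Definition locally_lipschitz (u : vec -> vec) : Prop :=
  forall p, exists2 r : R, 0 < r & exists L : R,
    forall v w, enorm (v - p) < r -> enorm (w - p) < r ->
      enorm (u v - u w) <= L * enorm (v - w).

Lemma csubdiff_eq_gradient h grad p v : (forall z, h z \is a fin_num) ->
  is_gradient h grad -> csubdiff h p v -> v = grad p.
Proof.
move=> hfin hgrad [_ hsub]; apply/eqP; rewrite -subr_eq0; apply/eqP.
set w := v - grad p.
apply: contra_eq (erefl true) => w_neq0.
have wp : 0 < enorm w.
  by rewrite lt_neqAle enorm_ge0 andbT; apply: contra_neq w_neq0 => /esym/enorm_eq0.
(* test the subgradient inequality along [w] at a distance where the gradient is accurate *)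
have [delta dp Hd] := hgrad p (enorm w / 2) (ltac:(by rewrite divr_gt0)).
pose t := delta / (2 * enorm w).
have tp : 0 < t by rewrite divr_gt0 // mulr_gt0.
pose z := p + t *: w.
have zp : z - p = t *: w by rewrite /z addrAC subrr add0r.
have tw : t * enorm w = delta / 2 by rewrite /t; field; rewrite gt_eqF.
have etw : enorm (z - p) = delta / 2 by rewrite zp enormZ gtr0_norm.
have := Hd z; rewrite etw => /(_ ltac:(lra)) /ler_normlP [_ upper].
move: (hsub z); rewrite -(fineK (hfin z)) -(fineK (hfin p)) -EFinD lee_fin zp.
rewrite !dotZr => lower.
have E : dot v w - dot (grad p) w = enorm w ^+ 2 by rewrite -dotBl enorm_sqr.
have : t * enorm w ^+ 2 <= enorm w / 2 * (t * enorm w).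
  by rewrite -E mulrBr tw; move: lower upper; rewrite zp dotZr; lra.
have : 0 < t * enorm w ^+ 2 by rewrite mulr_gt0 // exprn_gt0.
move=> h1 h2; nra.
Qed.

Local Open Scope ereal_scope.

Lemma argmin_linear_csubdiff g p v :
  (forall z, g z != -oo) -> (exists z, g z < +oo) ->
  (forall z, g p - (dot v p)%:E <= g z - (dot v z)%:E) -> csubdiff g p v.
Proof.
move=> gnoo [z0 gz0] gmin.
have gfin : g p \is a fin_num.
  rewrite fin_numE gnoo /=; apply/negP => /eqP gpoo.
  by move: (gmin z0) gz0; rewrite gpoo /=; case: (g z0).
split => // z; move: (gmin z); rewrite -(fineK gfin).
move: (gnoo z); case: (g z) => [r| |] //= _; last by move=> *; rewrite leey.
by rewrite -!EFinD !lee_fin dotBr; lra.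
Qed.

Lemma dcfun_fin g h p : g p \is a fin_num -> h p \is a fin_num ->
  dcfun g h p = (fine (g p) - fine (h p))%:E.
Proof. by move=> gfin hfin; rewrite /dcfun -(fineK gfin) -(fineK hfin). Qed.

Lemma dc_descent g h (rho_g rho_h : R) p q v :
  convexity_modulus g rho_g -> convexity_modulus h rho_h ->
  g p \is a fin_num -> h p \is a fin_num -> h q \is a fin_num ->
  csubdiff g q v -> csubdiff h p v ->
  (fine (g q) - fine (h q) + (rho_g + rho_h) / 2 * enorm (q - p) ^+ 2 <=
   fine (g p) - fine (h p))%R.
Proof.
move=> [_ mod_g] [_ mod_h] gpfin hpfin hqfin gsub hsub.
have gqfin := gsub.1.
have := mod_g _ p _ gsub; have := mod_h _ q _ hsub.
rewrite -(fineK gpfin) -(fineK hpfin) -(fineK hqfin) -(fineK gqfin).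
rewrite -!EFinD !lee_fin enorm_distC [dot v (p - q)]dotBr [dot v (q - p)]dotBr.
lra.
Qed.

Lemma dc_frechet_subdiff g h grad p v :
  (forall z, g z != -oo) -> (forall z, h z \is a fin_num) -> is_gradient h grad ->
  csubdiff g p v -> frechet_subdiff (dcfun g h) p (v - grad p)%R.
Proof.
move=> gnoo hfin hgrad [gpfin gsub].
rewrite /frechet_subdiff dcfun_fin //; split => // eps e0.
have [d d0 hnear] := hgrad p eps e0.
exists d => // z /andP[_ zd].
move: (gnoo z) (gsub z) (hnear z zd); rewrite /dcfun -(fineK gpfin).
case: (g z) => [r| |] //= _; last by move=> *; rewrite leey.
rewrite -(fineK (hfin z)) -!EFinD !lee_fin => /= gle /ler_normlP [_ hle].
by rewrite dotBl; lra.
Qed.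

Lemma frechet_limiting_subdiff phi p v :
  frechet_subdiff phi p v -> limiting_subdiff phi p v.
Proof.
move=> fv; split; first exact: fv.1.
by exists (fun=> p), (fun=> v); split => //; exact: cvg_cst.
Qed.

End Subdifferentials.

Section Sequences.
Variables (R : realType) (n : nat).
Implicit Type x : nat -> 'rV[R]_n.

Lemma bounded_seq_cluster_point x : bounded_seq x -> exists xs, cluster_point x xs.
Proof.
move=> [M xM]; have M1 : 0 < M + 1 by have := xM 0%N; have := enorm_ge0 (x 0%N); lra.
pose A := closed_ball (0 : 'rV[R]_n) (M + 1).
have cA : compact A.
  apply: bounded_closed_compact; last exact: closed_ball_closed.
  exists (M + 1); split; first exact: num_real.
  move=> N MN v; rewrite /A closed_ballE // /closed_ball_ /= sub0r normrN => vM.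
  exact: le_trans vM (ltW MN).
have xA : (x @ \oo) A.
  exists 0%N => // k _; rewrite /A closed_ballE // /closed_ball_ /= sub0r normrN.
  by apply: le_trans (normr_le_enorm _) _; have := xM k; lra.
have [xs [_ clxs]] := cA _ _ xA.
exists xs => eps N e0.
have B := nbhsx_ballx xs (eps / n.+1%:R) (divr_gt0 e0 (ltr0Sn _ _)).
have tail : (x @ \oo) [set v | exists2 k, (N <= k)%N & v = x k].
  by exists N => // k /= Nk; exists k.
have [_ [[k Nk ->] Bk]] := clxs _ _ tail B.
exists k => //; move: Bk; rewrite -ball_normE /ball_ /= distrC => Bk.
apply: le_lt_trans (enorm_le_normr _) _.
by rewrite mulrC -ltr_pdivlMr.
Qed.

Lemma dist_le_sum_steps x j m :
  `|x (j + m)%N - x j| <= \sum_(j <= i < j + m) enorm (x i.+1 - x i).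
Proof.
elim: m => [|m IH]; first by rewrite addn0 subrr normr0 big_geq.
rewrite addnS big_nat_recr /= ?leq_addr //.
have -> : x (j + m).+1 - x j = x (j + m).+1 - x (j + m)%N + (x (j + m)%N - x j).
  by rewrite addrA subrK.
apply: le_trans (ler_normD _ _) _; rewrite addrC.
by apply: lerD => //; exact: normr_le_enorm.
Qed.

Lemma finite_length_cvg x :
  (exists K B, forall k, \sum_(K <= j < k) enorm (x j.+1 - x j) <= B) ->
  exists l : 'rV[R]_n, x @ \oo --> l.
Proof.
move=> [K [B sumB]].
pose T k := \sum_(K <= j < k) enorm (x j.+1 - x j).
have T_split a b : (K <= a)%N -> (a <= b)%N ->
    T b = T a + \sum_(a <= j < b) enorm (x j.+1 - x j).
  by move=> Ka ab; rewrite /T -big_cat_nat.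
have T_mono a b : (a <= b)%N -> T a <= T b.
  move=> ab; have [Ka|aK] := leqP K a.
    by rewrite (T_split a b) // lerDl; apply: sumr_ge0 => *; exact: enorm_ge0.
  by rewrite /T [in leLHS]big_geq; [apply: sumr_ge0 => *; exact: enorm_ge0 | exact: ltnW].
have supT : has_sup (range T).
  by split; [exists (T 0%N), 0%N | exists B => _ [k _ <-]; exact: sumB].
(* the partial sums converge, so their tails are uniformly small *)
suff /cauchy_cvg cx : cauchy (x @ \oo) by exists (lim (x @ \oo)).
apply: cauchy_exP => e e0.
have [_ [k _ <-] Tk] := sup_adherent e0 supT.
exists (x (maxn k K)); exists (maxn k K) => // m Nm.
rewrite /= -ball_normE /ball_ /= distrC.
have := dist_le_sum_steps x (maxn k K) (m - maxn k K); rewrite subnKC // => dist.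
apply: le_lt_trans dist _.
have := T_split _ _ (leq_maxr k K) Nm; have := T_mono _ _ (leq_maxl k K).
have : T m <= sup (range T) by apply: sup_upper_bound => //; exists m.
lra.
Qed.

End Sequences.

Section DCAIterates.
Variables (R : realType) (n : nat) (g h : 'rV[R]_n -> \bar R) (rho_g rho_h : R).
Variables (x y : nat -> 'rV[R]_n) (grad : 'rV[R]_n -> 'rV[R]_n).
Hypotheses (g_neq_ninfty : forall z, g z != -oo%E) (g_dom : exists z, (g z < +oo)%E).
Hypothesis dca : DCA_sequence g h x y.
Hypotheses (mod_g : convexity_modulus g rho_g) (mod_h : convexity_modulus h rho_h).
Hypothesis rho_gt0 : 0 < rho_g + rho_h.
Hypotheses (h_fin : forall z, h z \is a fin_num) (h_grad : is_gradient h grad).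

Local Notation f := (dcfun g h).
Let F k := fine (g (x k)) - fine (h (x k)).
Let D k := enorm (x k.+1 - x k).

Lemma DCA_csubdiff_g k : csubdiff g (x k.+1) (y k).
Proof. exact: argmin_linear_csubdiff (dca k).2. Qed.

Lemma DCA_subgrad_eq_gradient k : y k = grad (x k).
Proof. exact: csubdiff_eq_gradient (dca k).1. Qed.

Let g_fin k : (1 <= k)%N -> g (x k) \is a fin_num.
Proof. by case: k => // k _; case: (DCA_csubdiff_g k). Qed.

Lemma DCA_value k : (1 <= k)%N -> f (x k) = (F k)%:E.
Proof. by move=> k1; rewrite dcfun_fin ?g_fin. Qed.

Lemma DCA_descent k : (1 <= k)%N -> F k.+1 + (rho_g + rho_h) / 2 * D k ^+ 2 <= F k.
Proof.
move=> k1; exact: dc_descent mod_g mod_h (g_fin k1) (h_fin _) (h_fin _)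
  (DCA_csubdiff_g k) (dca k).1.
Qed.

Lemma DCA_limiting_subdiff k :
  limiting_subdiff f (x k.+1) (grad (x k) - grad (x k.+1)).
Proof.
rewrite -DCA_subgrad_eq_gradient; apply: frechet_limiting_subdiff.
exact: dc_frechet_subdiff (DCA_csubdiff_g k).
Qed.

Let F_le i j : (1 <= i)%N -> (i <= j)%N -> F j <= F i.
Proof.
move=> i1; elim: j => [|j IH]; first by rewrite leqn0 => /eqP ->.
rewrite leq_eqVlt => /orP[/eqP-> //|]; rewrite ltnS => ij.
apply: le_trans (IH ij); have := DCA_descent (leq_trans i1 ij).
have : 0 <= (rho_g + rho_h) / 2 * D j ^+ 2 by rewrite mulr_ge0 ?sqr_ge0 ?divr_ge0 ?ltW.
lra.
Qed.

Variable xs : 'rV[R]_n.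
Hypothesis f_cont : {within dom f, continuous f}.
Hypothesis xs_cluster : cluster_point x xs.
Hypothesis xs_lojasiewicz : lojasiewicz_at f xs.
Hypothesis grad_lip : locally_lipschitz grad.

Let Fs := fine (f xs).
Let P k := `|x k - xs|.

Let x_dom k : (1 <= k)%N -> dom f (x k).
Proof. by move=> k1; rewrite /dom /= DCA_value // ltry. Qed.

Let normr_le_enorm_sub z : `|xs - z| <= enorm (z - xs).
Proof. by rewrite distrC; exact: normr_le_enorm. Qed.

Let f_near_xs e : 0 < e -> exists2 t, 0 < t &
  forall z, `|xs - z| < t -> dom f z -> `|Fs - fine (f z)| < e.
Proof.
move=> e0; have fxsE : f xs = Fs%:E by rewrite fineK //; case: xs_lojasiewicz.
have xs_dom : dom f xs by rewrite /dom /= fxsE ltry.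
have cf : f @ within (dom f) (nbhs xs) --> Fs%:E.
  by rewrite -fxsE; exact: (subspace_continuousP _ _).1 f_cont xs xs_dom.
have [_ /cvgrPdist_lt /(_ e e0)] := (fine_cvgP _ _).1 cf.
move=> /(nbhs_ballP xs _) [t t0 near_t].
by exists t => // z zt zdom; apply: near_t; rewrite // -ball_normE.
Qed.

Lemma DCA_value_ge k : (1 <= k)%N -> Fs <= F k.
Proof.
move=> k1; rewrite leNgt; apply/negP => Fk_lt.
have [t t0 near_t] := f_near_xs (ltac:(by rewrite subr_gt0) : 0 < Fs - F k).
have [j kj xj] := xs_cluster k t0.
have := near_t (x j) (le_lt_trans (normr_le_enorm_sub _) xj) (x_dom (leq_trans k1 kj)).
rewrite DCA_value ?(leq_trans k1 kj) //= ltr_norml => /andP[_ ?].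
by have := F_le k1 kj; lra.
Qed.

Lemma DCA_value_approach e : 0 < e -> exists2 k, (1 <= k)%N & F k - Fs < e.
Proof.
move=> e0; have [t t0 near_t] := f_near_xs e0.
have [j j1 xj] := xs_cluster 1%N t0; exists j => //.
have := near_t (x j) (le_lt_trans (normr_le_enorm_sub _) xj) (x_dom j1).
by rewrite DCA_value //= ltr_norml => /andP[? _]; lra.
Qed.

Lemma DCA_lojasiewicz_step : exists th C d, [/\ 0 <= th < 1, 0 <= C, 0 < d &
  forall k, (2 <= k)%N -> P k.-1 < d -> P k < d -> (F k - Fs) `^ th <= C * D k.-1].
Proof.
case: xs_lojasiewicz => _ [th [M [V [th01 M0 xsV loj]]]].
have [rL rL0 [L lipL]] := grad_lip xs.
have [dV dV0 ballV] := (nbhs_ballP xs V).1 xsV.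
have n1 : 0 < n.+1%:R :> R by [].
(* [P] is the max-norm distance, hence [n.+1] times it bounds the Euclidean one *)
exists th, (M * Num.max L 0), (Num.min dV (rL / n.+1%:R)); split => //.
- by apply: mulr_ge0; [exact: ltW | rewrite le_max lexx orbT].
- by rewrite lt_min dV0 divr_gt0.
case=> [//|k] _ /= Pk1 Pk.
have in_rL j : P j < Num.min dV (rL / n.+1%:R) -> enorm (x j - xs) < rL.
  move=> Pj; apply: le_lt_trans (enorm_le_normr _) _.
  by rewrite mulrC -ltr_pdivlMr //; apply: lt_le_trans Pj _; rewrite ge_min lexx orbT.
have Vxk : V (x k.+1).
  apply: ballV; rewrite -ball_normE /ball_ /= distrC.
  by apply: lt_le_trans Pk _; rewrite ge_min lexx.
have := loj _ _ Vxk (DCA_limiting_subdiff k).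
rewrite DCA_value //= ger0_norm ?subr_ge0 ?DCA_value_ge // => /le_trans; apply.
rewrite -mulrA ler_pM2l //.
apply: le_trans (lipL _ _ (in_rL _ Pk1) (in_rL _ Pk)) _.
by rewrite enorm_distC; apply: ler_wpM2r; [exact: enorm_ge0 | rewrite le_max lexx].
Qed.

Lemma DCA_finite_length :
  exists K B, forall k, \sum_(K <= j < k) enorm (x j.+1 - x j) <= B.
Proof.
have [th [C [d [th01 C0 d0 loj_step]]]] := DCA_lojasiewicz_step.
apply: (@lojasiewicz_finite_length _ F D P Fs ((rho_g + rho_h) / 2) C th d) => //.
- by rewrite divr_gt0.
- by move=> k; exact: enorm_ge0.
- exact: DCA_value_ge.
- exact: DCA_descent.
- move=> k; rewrite /P /D; have -> : x k.+1 - xs = x k - xs + (x k.+1 - x k).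
    by rewrite [RHS]addrC addrA subrK.
  by apply: le_trans (ler_normD _ _) _; rewrite lerD2l normr_le_enorm.
- move=> k; rewrite /P /D; have -> : x k - xs = x k.+1 - xs + (x k - x k.+1).
    by rewrite [RHS]addrC addrA subrK.
  by apply: le_trans (ler_normD _ _) _; rewrite lerD2l distrC normr_le_enorm.
- move=> e N e0; have [k Nk xk] := xs_cluster N e0; exists k => //.
  by apply: le_lt_trans xk; rewrite /P distrC normr_le_enorm_sub.
- exact: DCA_value_approach.
Qed.

End DCAIterates.

Theorem theorem4 (R : realType) (n : nat)
  (g h : 'rV[R]_n -> \bar R) (rho_g rho_h : R)
  (x y : nat -> 'rV[R]_n) :
  Gamma0 g -> Gamma0 h ->
  solution_set (dcfun g h) !=set0 ->
  DCA_sequence g h x y ->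
  bounded_seq x -> bounded_seq y ->
  convexity_modulus g rho_g -> convexity_modulus h rho_h ->
  {within dom (dcfun g h), continuous (dcfun g h)} ->
  (forall xs, cluster_point x xs -> lojasiewicz_at (dcfun g h) xs) ->
  0 < rho_g + rho_h ->
  diff_loclip_grad h ->
  exists l : 'rV[R]_n, x @ \oo --> l.
Proof.
move=> [[g_neq_ninfty g_dom] _] _ _ dca x_bnd _ mod_g mod_h f_cont loj rho_gt0
  [grad [h_fin [h_grad grad_lip]]].
have [xs xs_cluster] := bounded_seq_cluster_point x_bnd.
apply: finite_length_cvg.
exact: (DCA_finite_length g_neq_ninfty g_dom dca mod_g mod_h rho_gt0 h_fin h_grad
  f_cont xs_cluster (loj xs xs_cluster) grad_lip).
Qed.
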